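(* Let $G=(V,E)$ be a graph with a linear order $<$ on $E$, let $\bar{x}=(x_1,\dots,x_{|V|})$, and define $$U'(G,\bar{x},y)=\sum_{A\subseteq E}\prod_{i=1}^{|V|}x_i^{k_i((V,A))}\,y^{|A|}.$$ Then $$U'(G,\bar{x},y)=\sum_{F=(V,A_f)\in\mathcal{F}(G)}\ \sum_{A_i\subseteq E_i(F,G,<)}\ \prod_{j=1}^{|V|}x_j^{k_j((V,A_f\setminus A_i))}\,y^{|A_f\setminus A_i|}\,(1+y)^{e(F,G,<)}.$$
   Context: A graph $G=(V,E)$ consists of a finite nonempty vertex set $V$ and a finite set $E$ of edges. Each edge has as its set of endpoints a 1- or 2-element subset of $V$, so loops and parallel edges are allowed. $(V,A)$ is the spanning subgraph with edge set $A\subseteq E$. $k(H)$ is the number of connected components of $H$, and $k_i(H)$ is the number of connected components of $H$ having exactly $i$ vertices. $F_{-e+f}$ denotes $F$ with edge $e$ deleted and edge $f$ added. A spanning forest of $G$ is a spanning subgraph $F=(V,A)$ which is a forest (no cycles, no loops) with $k(F)=k(G)$; $\mathcal{F}(G)$ is the set of spanning forests. For a linear order $<$ on $E$ and $F=(V,A_f)\in\mathcal{F}(G)$: $e\in A_f$ is internally active if there is no $f\in E\setminus A_f$ with $e<f$ and $F_{-e+f}\in\mathcal{F}(G)$; the set of these is $E_i(F,G,<)$. $f\in E\setminus A_f$ is externally active if there is no $e\in A_f$ with $f<e$ and $F_{-e+f}\in\mathcal{F}(G)$; $e(F,G,<)$ is the number of externally active edges. *)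

From HB Require Import structures.
From mathcomp Require Import all_boot all_order all_algebra.
From Stdlib Require Import ClassicalEpsilon.
Set Implicit Arguments. Unset Strict Implicit. Unset Printing Implicit Defensive.
Import GRing.Theory.
Local Open Scope ring_scope.

Definition pbool (P : Prop) : bool :=
  if excluded_middle_informative P then true else false.

Section Graphs.
Variables (V E : finType) (ends : E -> {set V}).

(* A multigraph: every edge has a 1- or 2-element set of endpoints. *)
Definition is_graph : Prop :=
  (0 < #|V|)%N /\ forall e : E, (1 <= #|ends e| <= 2)%N.

Definition strict_linear_order (lt : rel E) : Prop :=
  irreflexive lt /\ transitive lt /\ (forall e f, e != f -> lt e f || lt f e).

Definition adj (A : {set E}) : rel V :=
  fun u v => [exists e in A, (u \in ends e) && (v \in ends e)].

Definition components (A : {set E}) : {set {set V}} :=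
  [set [set v | connect (adj A) u v] | u : V].

Definition kc (A : {set E}) : nat := #|components A|.
Definition kci (i : nat) (A : {set E}) : nat :=
  #|[set C in components A | #|C| == i]|.

(* A cycle in (V,A): distinct edges e_0..e_{m-1} in A (m >= 1) and distinct
   vertices v_0..v_{m-1} with ends e_i = {v_i, v_{i+1 mod m}}.
   m = 1 is a loop, m = 2 a pair of parallel edges. *)
Definition has_cycle (A : {set E}) : Prop :=
  exists (e0 : E) (v0 : V) (es : seq E) (vs : seq V),
    [/\ (0 < size es)%N, size vs = size es, uniq es && uniq vs,
        all (fun e => e \in A) es &
        forall i, (i < size es)%N ->
          ends (nth e0 es i) = [set nth v0 vs i;
                                   nth v0 vs ((i.+1) %% size es)]].

Definition spanning_forest (A : {set E}) : Prop :=
  ~ has_cycle A /\ kc A = kc [set: E].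

Definition swap (A : {set E}) (e f : E) : {set E} := f |: (A :\ e).

Variable lt : rel E.

Definition int_active (A : {set E}) : {set E} :=
  [set e in A | pbool (~ exists f, [/\ f \notin A, lt e f & spanning_forest (swap A e f)])].

Definition ext_active (A : {set E}) : nat :=
  #|[set f in ~: A | pbool (~ exists e, [/\ e \in A, lt f e & spanning_forest (swap A e f)])]|.
End Graphs.

Definition Uprime (R : comNzRingType) (V E : finType) (ends : E -> {set V})
    (x : nat -> R) (y : R) : R :=
  \sum_(A : {set E}) (\prod_(1 <= i < #|V|.+1) x i ^+ kci ends i A) * y ^+ #|A|.

From HB Require Import structures.
From mathcomp Require Import all_boot all_order all_algebra zify.
From Stdlib Require Import ClassicalEpsilon.
Set Implicit Arguments. Unset Strict Implicit. Unset Printing Implicit Defensive.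
Import GRing.Theory.

(* Crapo's interval partition applied to the subgraph expansion U'(G, x, y).

   For a spanning forest F let IA(F) be its internally and XA(F) its externally
   active edges.  The edge sets of G are partitioned into the intervals
   [F - IA(F), F + XA(F)], F ranging over the spanning forests: every edge set lies
   in some interval (choose a spanning forest maximizing a suitable weight) and in
   at most one (a symmetric exchange between two forests, applied at the largest
   edge where they differ, contradicts activity).  Inside the interval of F an edge
   set reads (F - Ai) + B with Ai in IA(F) and B in XA(F); every externally active
   edge is spanned by F - Ai, so (V, (F - Ai) + B) has the components of
   (V, F - Ai), and summing y^|B| over B yields the factor (1 + y)^e(F). *)

Lemma pboolP (P : Prop) : reflect P (pbool P).
Proof. by rewrite /pbool; case: excluded_middle_informative => h; constructor. Qed.

Lemma set2_of_card2 (T : finType) (X : {set T}) a b :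
  (#|X| <= 2)%N -> a \in X -> b \in X -> a != b -> X = [set a; b].
Proof.
move=> X2 aX bX ab; apply/eqP; rewrite eq_sym eqEcard cards2 ab (leq_trans X2) //.
by rewrite andbT; apply/subsetP => z; rewrite !inE => /orP[] /eqP ->.
Qed.

Section Connectivity.
Variables (V E : finType) (ends : E -> {set V}).
Implicit Types (A B Q H : {set E}) (e f g : E) (u v a b : V).
Local Notation conn A := (connect (adj ends A)).

Lemma adj_sym A : symmetric (adj ends A).
Proof.
move=> u v; apply/existsP/existsP => -[e /and3P[eA ue ve]]; exists e;
  by rewrite eA ue ve.
Qed.

Lemma conn_sym A u v : conn A u v = conn A v u.
Proof. exact: (sym_connect_sym (adj_sym A)). Qed.

Lemma conn_edge A e a b : e \in A -> a \in ends e -> b \in ends e -> conn A a b.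
Proof. by move=> eA ae be; apply: connect1; apply/existsP; exists e; rewrite eA ae be. Qed.

(* [spans A e]: both endpoints of e lie in one component of (V, A).  An edge e of A
   lies on a cycle exactly when it is spanned by A - e (cycle_spans, spans_cycle). *)
Definition spans A e : bool :=
  [forall a in ends e, forall b in ends e, conn A a b].

Lemma spansP A e :
  reflect (forall a b, a \in ends e -> b \in ends e -> conn A a b) (spans A e).
Proof.
apply: (iffP forall_inP) => [h a b ae | h a ae]; first exact: (forall_inP (h a ae)).
by apply/forall_inP => b be; apply: h.
Qed.

Lemma spans_mem A e : e \in A -> spans A e.
Proof. by move=> eA; apply/spansP => a b; apply: conn_edge. Qed.

Lemma not_spans A e :
  ~~ spans A e -> exists a b, [/\ a \in ends e, b \in ends e & ~~ conn A a b].
Proof. by case/forall_inPn => a ae /forall_inPn[b be nab]; exists a, b. Qed.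

Lemma conn_spans Q H u v :
  (forall e, e \in Q -> spans H e) -> conn Q u v -> conn H u v.
Proof.
move=> QH; apply: connect_sub => a b /existsP[e /and3P[eQ ae be]].
exact: (spansP _ _ (QH e eQ)).
Qed.

Lemma conn_sub Q H u v : Q \subset H -> conn Q u v -> conn H u v.
Proof. by move=> sQH; apply: conn_spans => e /(subsetP sQH); apply: spans_mem. Qed.

Lemma conn_cut Q e u v : conn Q u v -> ~~ conn (Q :\ e) u v ->
  exists a b, [/\ a \in ends e, b \in ends e, conn (Q :\ e) u a & conn (Q :\ e) b v].
Proof.
move=> /connectP[p pp lp]; elim: p u pp lp => [|w p IH] u /= pp lp nuv.
  by rewrite lp connect0 in nuv.
case/andP: pp => /existsP[g /and3P[gQ ug wg]] pw.
have [wv|nwv] := boolP (conn (Q :\ e) w v).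
  have [ge|ge] := eqVneq g e; first by subst g; exists u, w; split; rewrite ?connect0.
  by rewrite (connect_trans _ wv) ?(conn_edge _ ug wg) ?inE ?ge in nuv.
have [a [b [ae be wa bv]]] := IH w pw lp nwv.
have [ge|ge] := eqVneq g e; first by subst g; exists u, b; split; rewrite ?connect0.
exists a, b; split=> //; apply: connect_trans wa.
by apply: conn_edge ug wg; rewrite !inE ge.
Qed.

Lemma components_eq A B : conn A =2 conn B -> components ends A = components ends B.
Proof. by move=> AB; apply: eq_imset => u; apply/setP => v; rewrite !inE AB. Qed.

Lemma kc_eq A B : conn A =2 conn B -> kc ends A = kc ends B.
Proof. by move=> AB; rewrite /kc (components_eq AB). Qed.

Lemma kci_eq i A B : conn A =2 conn B -> kci ends i A = kci ends i B.
Proof. by move=> AB; rewrite /kci (components_eq AB). Qed.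

(* If A is contained in B and has as many components, it has the same components:
   each component of B is a union of components of A. *)
Lemma conn_kc A B u v : A \subset B -> kc ends A = kc ends B -> conn B u v -> conn A u v.
Proof.
move=> sAB kcAB cB.
pose cl (X : {set E}) u := [set w | conn X u w].
pose h (C : {set V}) := \bigcup_(w in C) cl B w.
have hcl w : h (cl A w) = cl B w.
  apply/setP=> z; apply/bigcupP/idP => [[w'] | wz].
    by rewrite !inE => ww' w'z; apply: connect_trans (conn_sub sAB ww') w'z.
  by exists w => //; rewrite inE connect0.
have compB : components ends B = h @: components ends A.
  by rewrite /components -imset_comp; apply: eq_imset => w /=; rewrite hcl.
have inj : {in components ends A &, injective h}.
  by apply/imset_injP; rewrite -compB; apply/eqP; exact: (esym kcAB).
have eqc : cl A u = cl A v.
  apply: inj; try by apply/imsetP; eexists.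
  rewrite !hcl; apply/setP=> z; rewrite !inE; apply/idP/idP => cz.
    by apply: connect_trans cz; rewrite conn_sym.
  exact: connect_trans cB cz.
have : v \in cl A v by rewrite inE connect0.
by rewrite -eqc inE.
Qed.

Lemma cycle_spans A : has_cycle ends A -> exists2 e, e \in A & spans (A :\ e) e.
Proof.
case=> e0 [v0 [es [vs [es_gt0 size_vs /andP[ues uvs] Aes ends_es]]]].
set m := size es in es_gt0 size_vs ends_es.
have inA i : (i < m)%N -> nth e0 es i \in A by move=> im; apply: (allP Aes); exact: mem_nth.
set e := nth e0 es 0; exists e; first exact: inA.
set v1 := nth v0 vs (1 %% m).
have v1_conn i : (i < m)%N -> conn (A :\ e) v1 (nth v0 vs (i.+1 %% m)).
  elim: i => [|i IH] im; first exact: connect0.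
  apply: connect_trans (IH (ltnW im)) _; rewrite (modn_small im).
  apply: (conn_edge (e := nth e0 es i.+1)).
  - by rewrite !inE inA // andbT /e (nth_uniq e0 im es_gt0 ues).
  - by rewrite ends_es // !inE eqxx.
  - by rewrite ends_es // !inE eqxx orbT.
have v1v0 : conn (A :\ e) v1 (nth v0 vs 0).
  have m_pred : m.-1.+1 = m by case: (m) es_gt0.
  by have := v1_conn m.-1; rewrite m_pred modnn; apply; rewrite -m_pred.
apply/spansP => a b; rewrite /e ends_es // !inE -/v1.
by move=> /orP[] /eqP-> /orP[] /eqP->; rewrite ?connect0 // conn_sym.
Qed.
End Connectivity.

Section Forests.
Variables (V E : finType) (ends : E -> {set V}).
Hypothesis ends_card : forall e, (1 <= #|ends e| <= 2)%N.
Implicit Types (A B Q H F : {set E}) (e f g : E) (u v a b : V).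
Local Notation conn A := (connect (adj ends A)).
Local Notation sf := (spanning_forest ends).

Lemma ends_le2 e : (#|ends e| <= 2)%N.
Proof. by case/andP: (ends_card e). Qed.

Lemma ends_pair e : exists a b, ends e = [set a; b].
Proof.
have : (#|ends e| == 1) || (#|ends e| == 2).
  by move: (ends_card e); case: #|ends e| => [|[|[|n]]].
case/orP => [/cards1P[a ->] | /cards2P[a [b [_ ->]]]]; last by exists a, b.
by exists a, a; rewrite setUid.
Qed.

Lemma walk_edges Q e0 v0 b p : path (adj ends Q) b p -> uniq (b :: p) ->
  exists es : seq E, [/\ size es = size p, uniq es, all (mem Q) es &
    forall i, (i < size p)%N ->
      ends (nth e0 es i) = [set nth v0 (b :: p) i; nth v0 p i]].
Proof.
elim: p b => [|c p IH] b; first by exists [::].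
move=> /andP[/existsP[g /and3P[gQ bg cg]] pc] /andP[bNcp ucp].
have [es [size_es ues Qes ends_es]] := IH c pc ucp.
have gE : ends g = [set b; c].
  apply: set2_of_card2 => //; first exact: ends_le2.
  by apply: contraNneq bNcp => ->; apply: mem_head.
exists (g :: es); split => /=; first by rewrite size_es.
- rewrite ues andbT; apply/(nthP e0) => -[i ilt gi].
  have ip : (i < size p)%N by rewrite -size_es.
  have : b \in ends (nth e0 es i) by rewrite gi gE set21.
  rewrite ends_es // !inE => /orP[] /eqP bi; move: bNcp.
    by rewrite bi mem_nth // ltnS ltnW.
  by rewrite bi inE mem_nth ?orbT.
- by rewrite Qes andbT.
- by case=> [|i] ilt; [rewrite gE | apply: ends_es].
Qed.

Lemma walk_cycle Q e a b p : e \notin Q -> ends e = [set a; b] ->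
  path (adj ends Q) b p -> uniq (b :: p) -> last b p = a -> has_cycle ends (e |: Q).
Proof.
move=> eNQ eE pp up lp.
have [es [size_es ues Qes ends_es]] := walk_edges e b pp up.
exists e, b, (rcons es e), (b :: p); split.
- by rewrite size_rcons.
- by rewrite size_rcons size_es.
- rewrite up andbT rcons_uniq ues andbT; apply: contra eNQ; exact: (allP Qes).
- rewrite all_rcons setU11 /=; apply/allP => g /(allP Qes) gQ; exact: setU1r.
- move=> i; rewrite size_rcons ltnS nth_rcons size_es leq_eqVlt => /orP[/eqP -> | ilt].
    rewrite ltnn eqxx modnn eE -lp -[last b p](nth_last b (b :: p)) /=.
    by rewrite setUC.
  by rewrite ilt modn_small ?ltnS // ends_es.
Qed.

Lemma spans_cycle A e : e \in A -> spans ends (A :\ e) e -> has_cycle ends A.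
Proof.
move=> eA /spansP eAe; have [a [b eE]] := ends_pair e.
have /connectP[p pp lp] : conn (A :\ e) b a by apply: eAe; rewrite eE !inE eqxx ?orbT.
case: (shortenP pp) lp => q pq uq _ lq.
by rewrite -(setD1K eA); apply: walk_cycle pq uq (esym lq); rewrite ?setD11.
Qed.

Lemma spans_conn H e a b :
  a \in ends e -> b \in ends e -> a != b -> conn H a b -> spans ends H e.
Proof.
move=> ae be ab cab; apply/spansP; rewrite (set2_of_card2 (ends_le2 e) ae be ab).
by move=> u w; rewrite !inE => /orP[] /eqP-> /orP[] /eqP->; rewrite ?connect0 // conn_sym.
Qed.

Lemma detour_spans Q H e u v : conn Q u v -> ~~ conn (Q :\ e) u v ->
  Q :\ e \subset H -> conn H u v -> spans ends H e.
Proof.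
move=> uv nuv sQH Huv; have [a [b [ae be ua bv]]] := conn_cut uv nuv.
have [ab|ab] := eqVneq a b; first by subst b; rewrite (connect_trans ua bv) in nuv.
apply: (spans_conn ae be ab).
have au : conn H a u by rewrite conn_sym (conn_sub sQH ua).
have vb : conn H v b by rewrite conn_sym (conn_sub sQH bv).
exact: connect_trans (connect_trans au Huv) vb.
Qed.

Lemma forest_bridge F e : ~ has_cycle ends F -> e \in F -> ~~ spans ends (F :\ e) e.
Proof. by move=> acF eF; apply/negP => /(spans_cycle eF). Qed.

Lemma sf_conn F : sf F -> conn F =2 conn [set: E].
Proof.
case=> _ kcF u v; apply/idP/idP; first exact: conn_sub (subsetT F).
exact: conn_kc (subsetT F) kcF.
Qed.

Lemma spans_forest F f : sf F -> spans ends F f.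
Proof.
by move=> sF; apply/spansP => a b af bf; rewrite sf_conn //; apply: conn_edge af bf.
Qed.

Lemma exchange F e f : sf F -> e \in F -> f \notin F -> ~~ spans ends (F :\ e) f ->
  sf (swap F e f).
Proof.
move=> sF eF fF nfe; have [u [v [uf vf nuv]]] := not_spans nfe.
have sFe : F :\ e \subset swap F e f by apply/subsetP => z zF; rewrite in_setU1 zF orbT.
have connF' : conn (swap F e f) =2 conn [set: E].
  move=> x y; apply/idP/idP; first exact: conn_sub (subsetT _).
  rewrite -(sf_conn sF); apply: conn_spans => g gF.
  have [-> | ge] := eqVneq g e; last by apply: spans_mem; rewrite !inE ge gF orbT.
  apply: (detour_spans (u := u) (v := v)) nuv sFe _.
    by rewrite sf_conn // (conn_edge _ uf vf).
  by apply: conn_edge uf vf; apply: setU11.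
split; last exact: kc_eq connF'.
case/cycle_spans => g gF' gsp.
have [gf | gf] := eqVneq g f.
  by move: gsp; rewrite gf /swap setU1K ?(negbTE nfe) // !inE (negbTE fF) andbF.
have gFe : g \in F :\ e by move: gF'; rewrite /swap in_setU1 (negbTE gf).
have [c [d [cg dg ncd]]] := not_spans (forest_bridge sF.1 (setD1P gFe).2).
have cd : conn (swap F e f :\ g) c d by move/spansP: gsp; apply.
apply: (negP nfe); apply: (detour_spans cd _ _ (conn_edge gFe cg dg)).
  apply: contra ncd; apply: conn_sub; apply/subsetP => z; rewrite !inE.
  by case: (z == f); case: (z == g); case: (z == e).
apply/subsetP => z; rewrite !inE.
by case: (z == f); case: (z == g); case: (z == e).
Qed.

(* Every graph has a spanning forest: a minimal edge set with the connectivity of G. *)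
Lemma exists_sf : exists F, sf F.
Proof.
pose P (Q : {set E}) := [forall u, forall v, conn Q u v == conn [set: E] u v].
have PT : P [set: E] by apply/forallP => u; apply/forallP => v.
have [Q /minsetP[PQ minQ] _] := minset_exists PT.
have cQ : conn Q =2 conn [set: E] by move=> u v; apply/eqP; exact: (forallP (forallP PQ u) v).
exists Q; split; last exact: kc_eq cQ.
case/cycle_spans => g gQ gsp.
have PQg : P (Q :\ g).
  apply/forallP => u; apply/forallP => v; apply/eqP; rewrite -cQ.
  apply/idP/idP; first exact: conn_sub (subD1set Q g).
  apply: conn_spans => h hQ; have [-> // | hg] := eqVneq h g.
  by apply: spans_mem; rewrite !inE hg.
by have := minQ _ PQg (subD1set Q g) => /setP/(_ g); rewrite setD11 gQ.
Qed.

(* In a forest F, an edge spanned by Q (a subset of F) and by F - e is still spanned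
   by Q - e: otherwise the detour through e would make e spanned by F - e. *)
Lemma spans_remove F Q e f : ~ has_cycle ends F -> Q \subset F -> e \in F ->
  spans ends Q f -> spans ends (F :\ e) f -> spans ends (Q :\ e) f.
Proof.
move=> acF sQF eF /spansP fQ /spansP fFe; apply/spansP => u v uf vf.
apply/negPn/negP => nuv; apply: (negP (forest_bridge acF eF)).
exact: (detour_spans (fQ u v uf vf) nuv (setSD _ sQF) (fFe u v uf vf)).
Qed.
End Forests.

Section Activity.
Variables (V E : finType) (ends : E -> {set V}).
Hypothesis ends_card : forall e, (1 <= #|ends e| <= 2)%N.
Variable lt : rel E.
Hypothesis lt_linear : strict_linear_order lt.
Implicit Types (A F Ai B : {set E}) (e f g : E).
Local Notation conn A := (connect (adj ends A)).
Local Notation sf := (spanning_forest ends).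
Local Notation IA := (int_active ends lt).

Definition ext_active_set F : {set E} :=
  [set f in ~: F | pbool (~ exists e, [/\ e \in F, lt f e & sf (swap F e f)])].
Local Notation XA := ext_active_set.

Lemma ext_activeE F : ext_active ends lt F = #|XA F|.
Proof. by []. Qed.

Lemma int_active_sub F : IA F \subset F.
Proof. by apply/subsetP => e /setIdP[]. Qed.

Lemma ext_active_sub F : XA F \subset ~: F.
Proof. by apply/subsetP => f /setIdP[]. Qed.

Lemma int_active_swap F e f : e \in IA F -> f \notin F -> sf (swap F e f) -> ~~ lt e f.
Proof. by case/setIdP => _ /pboolP eI fF sFef; apply/negP => ef; apply: eI; exists f. Qed.

Lemma ext_active_swap F e f : f \in XA F -> e \in F -> sf (swap F e f) -> ~~ lt f e.
Proof. by case/setIdP => _ /pboolP fX eF sFef; apply/negP => fe; apply: fX; exists e. Qed.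

Lemma lt_total e f : e != f -> lt e f || lt f e.
Proof. by case: lt_linear => _ [_]; apply. Qed.

Definition rank e : nat := #|[set g | lt g e]|.

Lemma rank_lt e f : lt e f -> (rank e < rank f)%N.
Proof.
case: lt_linear => irr [trans _] ef; apply: proper_card; apply/properP; split.
  by apply/subsetP => g; rewrite !inE => /trans; apply.
by exists e; rewrite !inE ?ef ?irr.
Qed.

Lemma rank_bound e : (rank e < #|E|)%N.
Proof.
case: lt_linear => irr _; rewrite /rank -cardsT; apply: proper_card.
by apply/properP; split; [apply: subsetT | exists e; rewrite !inE ?irr].
Qed.

(* An externally active edge f stays spanned when an internally active edge e is
   removed from F: otherwise F - e + f would be a spanning forest, contradicting the
   activity of e or of f, whichever is smaller. *)
Lemma active_pair_spans F e f : sf F -> e \in IA F -> f \in XA F ->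
  spans ends (F :\ e) f.
Proof.
move=> sF eI fX; apply/negPn/negP => nfe.
have eF := subsetP (int_active_sub F) e eI.
have fF : f \notin F by have := subsetP (ext_active_sub F) f fX; rewrite inE.
have sFef := exchange ends_card sF eF fF nfe.
have ef : e != f by apply: contraNneq fF => <-.
case/orP: (lt_total ef) => [e_lt_f | f_lt_e].
  by move/negP: (int_active_swap eI fF sFef).
by move/negP: (ext_active_swap fX eF sFef).
Qed.

Lemma ext_active_spans F Ai f : sf F -> Ai \subset IA F -> f \in XA F ->
  spans ends (F :\: Ai) f.
Proof.
move=> sF; have [n] := ubnP #|Ai|; elim: n Ai => // n IH Ai ltAn sAi fX.
have [-> | [e eAi]] := set_0Vmem Ai; first by rewrite setD0 spans_forest.
have eI := subsetP sAi e eAi.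
rewrite -(setD1K eAi) setUC -setDDl.
apply: (spans_remove ends_card sF.1 (subsetDl _ _) (subsetP (int_active_sub F) e eI)).
  apply: IH fX; last exact: subset_trans (subD1set Ai e) sAi.
  by rewrite (cardsD1 e Ai) eAi add1n ltnS in ltAn.
exact: active_pair_spans.
Qed.

(* Take g on a minimal path of F' between the endpoints
   of d that is not spanned by F - d. *)
Lemma symmetric_exchange F F' d : sf F -> sf F' -> d \in F -> d \notin F' ->
  exists g, [/\ g \in F', g \notin F, sf (swap F d g) & sf (swap F' g d)].
Proof.
move=> sF sF' dF dF'.
have [a [b [ad bd nab]]] := not_spans (forest_bridge ends_card sF.1 dF).
have abF' : conn F' a b by rewrite (sf_conn sF') (conn_edge (in_setT d) ad bd).
have [Q minQ sQF'] := minset_exists (P := fun Q => conn Q a b) abF'.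
have abQ : conn Q a b := minsetp minQ.
have [g gQ ngd] : exists2 g, g \in Q & ~~ spans ends (F :\ d) g.
  apply/exists_inP; apply: contraNT nab; rewrite negb_exists_in => /forall_inP Qd.
  by apply: conn_spans abQ => h /Qd; rewrite negbK.
have gF' := subsetP sQF' g gQ.
have nabQg : ~~ conn (Q :\ g) a b.
  apply/negP => abQg; have := minsetinf minQ abQg (subD1set Q g).
  by move/setP/(_ g); rewrite setD11 gQ.
have nabF'g : ~~ conn (F' :\ g) a b.
  apply/negP => abF'g; apply: (negP (forest_bridge ends_card sF'.1 gF')).
  exact: detour_spans abQ nabQg (setSD _ sQF') abF'g.
have gF : g \notin F.
  apply: contra ngd => gF; apply: spans_mem; rewrite !inE gF andbT.
  by apply/eqP => gd; rewrite -gd gF' in dF'.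
exists g; split => //; apply: exchange => //.
by apply: contra nabF'g => /spansP; apply.
Qed.

Definition in_interval F A : bool :=
  (F :\: A \subset IA F) && (A :\: F \subset XA F).

(* Two spanning forests whose intervals share A cannot differ by an edge d of F
   exceeding all edges of F' - F: the symmetric exchange would contradict the
   activity of the traded edge. *)
Lemma interval_max_diff F F' A d : sf F -> sf F' ->
  in_interval F A -> in_interval F' A -> d \in F -> d \notin F' ->
  (forall g, g \in F' -> g \notin F -> lt g d) -> False.
Proof.
move=> sF sF' /andP[_ AF] /andP[F'A _] dF dF' dmax.
have [g [gF' gF sFdg sF'gd]] := symmetric_exchange sF sF' dF dF'.
have gd := dmax g gF' gF.
have [gA | gNA] := boolP (g \in A).
  have gX : g \in XA F by apply: (subsetP AF); rewrite inE gA gF.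
  by move/negP: (ext_active_swap gX dF sFdg).
have gI : g \in IA F' by apply: (subsetP F'A); rewrite inE gNA gF'.
by move/negP: (int_active_swap gI dF' sF'gd).
Qed.

(* So the intervals of distinct spanning forests are disjoint: apply the previous
   lemma to the largest edge of the symmetric difference. *)
Lemma interval_unique A F F' : sf F -> sf F' ->
  in_interval F A -> in_interval F' A -> F = F'.
Proof.
move=> sF sF' iF iF'; apply/eqP/negPn/negP => neqFF'.
set D := (F :\: F') :|: (F' :\: F).
have [d0 d0D] : exists d0, d0 \in D.
  by apply/set0Pn; rewrite setU_eq0 !setD_eq0 -eqEsubset.
have [d dD dmax] := @arg_maxnP _ d0 (mem D) rank d0D.
have dmaxlt g : g \in D -> g != d -> lt g d.
  move=> gD gd; case/orP: (lt_total gd) => // dg.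
  by have : (rank g <= rank d)%N := dmax g gD; rewrite leqNgt rank_lt.
case/setUP: dD => /setDP[d_in d_out].
  apply: (interval_max_diff sF sF' iF iF' d_in d_out) => g gF' gF.
  by apply: dmaxlt; [rewrite !inE gF gF' orbT | apply/eqP => gd; rewrite gd d_in in gF].
apply: (interval_max_diff sF' sF iF' iF d_in d_out) => g gF gF'.
by apply: dmaxlt; [rewrite !inE gF gF' | apply/eqP => gd; rewrite gd d_in in gF'].
Qed.

(* Every edge set lies in some interval: a spanning forest maximizing a weight that
   favours edges of A, and among them smaller ones, admits no improving exchange. *)
Lemma exists_interval A : exists2 F, sf F & in_interval F A.
Proof.
have [F0 sF0] := exists_sf ends.
pose K := #|E|.
pose c e := if e \in A then (2 * K - rank e)%N else rank e.
pose Phi F := (\sum_(e in F) c e)%N.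
have [F /pboolP sF Fmax] :=
  @arg_maxnP _ F0 (fun F => pbool (sf F)) Phi (introT (pboolP _) sF0).
have no_gain e f : e \in F -> f \notin F -> sf (swap F e f) -> (c e < c f)%N -> False.
  move=> eF fF sFef cef; have := Fmax _ (introT (pboolP _) sFef).
  rewrite /geq /Phi /swap (big_setD1 e eF) /= big_setU1 /=; first lia.
  by rewrite !inE negb_and fF orbT.
have rK e : (rank e < K)%N := rank_bound e.
exists F => //; apply/andP; split; apply/subsetP.
  move=> e /setDP[eF eA]; rewrite inE eF /=.
  apply/pboolP => -[f [fF ef sFef]]; apply: (no_gain e f eF fF sFef).
  have := rank_lt ef; have := rK e; have := rK f.
  by rewrite /c (negbTE eA); case: (f \in A); lia.
move=> f /setDP[fA fF]; rewrite !inE fF /=.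
apply/pboolP => -[e [eF fe sFef]]; apply: (no_gain e f eF fF sFef).
have := rank_lt fe; have := rK e; have := rK f.
by rewrite /c fA; case: (e \in A); lia.
Qed.

Lemma conn_interval F Ai B : sf F -> Ai \subset IA F -> B \subset XA F ->
  conn ((F :\: Ai) :|: B) =2 conn (F :\: Ai).
Proof.
move=> sF sAi sB u v; apply/idP/idP; last exact: conn_sub (subsetUl _ _).
apply: conn_spans => g /setUP[gF | gB]; first exact: spans_mem.
exact: ext_active_spans sF sAi (subsetP sB g gB).
Qed.

Lemma sum_by_forest (R : nmodType) (g : {set E} -> R) :
  (\sum_(A : {set E}) g A = \sum_(F | pbool (sf F)) \sum_(A | in_interval F A) g A)%R.
Proof.
rewrite (exchange_big_dep predT) //=; apply: eq_bigr => A _.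
have [F0 sF0 iF0] := exists_interval A.
rewrite (big_pred1 F0) // => F /=; apply/idP/eqP => [/andP[/pboolP sF iF] | ->].
  exact: interval_unique sF sF0 iF iF0.
by rewrite iF0 andbT; apply/pboolP.
Qed.
End Activity.

Local Open Scope ring_scope.

Lemma sum_subsets (R : comNzRingType) (T : finType) (X : {set T}) (y : R) :
  \sum_(B : {set T} | B \subset X) y ^+ #|B| = (1 + y) ^+ #|X|.
Proof.
have [n] := ubnP #|X|; elim: n X => // n IH X ltXn.
have [-> | [a aX]] := set_0Vmem X.
  by rewrite (big_pred1 set0) => [|B]; rewrite ?cards0 ?subset0.
have cardX : #|X| = (#|X :\ a|).+1 by rewrite (cardsD1 a X) aX.
have ltXa : (#|X :\ a| < n)%N by rewrite cardX ltnS in ltXn.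
have IHa := IH _ ltXa.
rewrite (bigID (fun B : {set T} => a \in B)) /= addrC cardX exprS mulrDl mul1r -IHa.
congr (_ + _); first by apply: eq_bigl => B; rewrite subsetD1.
rewrite mulr_sumr (reindex_onto (fun B => a |: B) (fun B => B :\ a)) /=; last first.
  by move=> B /andP[_ aB]; rewrite setD1K.
apply: eq_big => [B | B /andP[_ /eqP <-]]; last by rewrite cardsU1 setD11 exprS.
rewrite setU11 andbT; apply/andP/idP => [[sBX /eqP <-] | sB]; first exact: setSD.
by rewrite setU1K ?(subsetD1P sB).2 // subUset sub1set aX (subsetD1P sB).1.
Qed.

Lemma sum_interval (R : nmodType) (T : finType) (F I X : {set T}) (g : {set T} -> R) :
  I \subset F -> X \subset ~: F ->
  \sum_(A : {set T} | (F :\: A \subset I) && (A :\: F \subset X)) g A =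
  \sum_(Ai : {set T} | Ai \subset I) \sum_(B : {set T} | B \subset X) g ((F :\: Ai) :|: B).
Proof.
move=> sIF sXF.
rewrite (partition_big (fun A => F :\: A) (fun Ai => Ai \subset I)); last by move=> A /andP[].
apply: eq_bigr => Ai sAi.
rewrite (reindex_onto (fun B => (F :\: Ai) :|: B) (fun A => A :\: F)) /=; last first.
  move=> A /andP[_ /eqP <-]; apply/setP => z; rewrite !inE.
  by case: (z \in A); case: (z \in F).
apply: eq_bigl => B; apply/idP/idP => [/andP[/andP[/andP[_ sBX] _] /eqP <-] // | sBX].
have BF z : (z \in B) ==> (z \notin F).
  by apply/implyP => /(subsetP sBX)/(subsetP sXF); rewrite inE.
have AiF z : (z \in Ai) ==> (z \in F).
  by apply/implyP => /(subsetP sAi)/(subsetP sIF).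
have -> : (F :\: Ai :|: B) :\: F = B.
  apply/setP => z; rewrite !inE; move: (BF z) (AiF z).
  by case: (z \in B); case: (z \in F); case: (z \in Ai).
have -> : F :\: (F :\: Ai :|: B) = Ai.
  apply/setP => z; rewrite !inE; move: (BF z) (AiF z).
  by case: (z \in B); case: (z \in F); case: (z \in Ai).
by rewrite sAi sBX !eqxx.
Qed.

Theorem theorem3p5 (R : comNzRingType) (V E : finType) (ends : E -> {set V})
    (lt : rel E) (x : nat -> R) (y : R) :
  is_graph ends -> strict_linear_order lt ->
  Uprime ends x y =
  \sum_(Af : {set E} | pbool (spanning_forest ends Af))
    \sum_(Ai : {set E} | Ai \subset int_active ends lt Af)
      (\prod_(1 <= j < #|V|.+1) x j ^+ kci ends j (Af :\: Ai))
        * y ^+ #|Af :\: Ai| * (1 + y) ^+ ext_active ends lt Af.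
Proof.
move=> [_ ends_card] lt_linear.
pose P (A : {set E}) := \prod_(1 <= j < #|V|.+1) x j ^+ kci ends j A.
rewrite /Uprime -/P (sum_by_forest ends_card lt_linear).
apply: eq_bigr => F /pboolP sF.
rewrite (sum_interval _ (int_active_sub _ _ F) (ext_active_sub _ _ F)).
apply: eq_bigr => Ai sAi; rewrite ext_activeE -sum_subsets mulr_sumr.
apply: eq_bigr => B sB.
have disjB : [disjoint F :\: Ai & B].
  rewrite disjoint_sym disjoints_subset (subset_trans sB) //.
  by rewrite (subset_trans (ext_active_sub _ _ F)) // setCS subsetDl.
rewrite cardsU (disjoint_setI0 disjB) cards0 subn0 exprD mulrA.
congr (_ * _ * _); apply: eq_bigr => j _.
by rewrite (kci_eq _ (conn_interval ends_card lt_linear sF sAi sB)).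
Qed.
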